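(* Let $A\in\mathbb{R}^{n\times n}$ be symmetric and positive definite, and let $i_1,\dots,i_n$ be any ordering of the indices $\{1,\dots,n\}$. Define $A^{(1)}=A$ and, for $k=1,\dots,n$, let $a^{(k)}$ denote the $i_k$-th row of $A^{(k)}$ (as a column vector), set $$x_k=\frac{a^{(k)}}{\sqrt{A^{(k)}_{i_ki_k}}},\qquad A^{(k+1)}=A^{(k)}-x_kx_k^{T}.$$ Then every pivot $A^{(k)}_{i_ki_k}$ is positive, and the resulting vectors satisfy $$\sum_{k=1}^n x_kx_k^{*}=A\qquad\text{and}\qquad \sum_{k=1}^n\|x_k\|_1^2\leq n\cdot\operatorname{tr}(A).$$
   Context: $\|x\|_1=\sum_i|x_i|$ denotes the $\ell^1$-norm of a vector. *)

From HB Require Import structures.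
From mathcomp Require Import all_boot all_order all_algebra all_fingroup.
From mathcomp Require Import reals.
Set Implicit Arguments. Unset Strict Implicit. Unset Printing Implicit Defensive.
Import Order.TTheory GRing.Theory Num.Theory.
Local Open Scope ring_scope.

Definition sym_mx (R : realType) n (A : 'M[R]_n) : Prop := A^T = A.
Definition posdef_mx (R : realType) n (A : 'M[R]_n) : Prop :=
  forall v : 'cV[R]_n, v != 0 -> 0 < (v^T *m A *m v) 0 0.

Definition chol_vec (R : realType) n (B : 'M[R]_n) (i : 'I_n) : 'cV[R]_n :=
  \col_j (B i j / Num.sqrt (B i i)).

Definition chol_step (R : realType) n (B : 'M[R]_n) (i : 'I_n) : 'M[R]_n :=
  B - chol_vec B i *m (chol_vec B i)^T.

Definition chol_mat (R : realType) n (A : 'M[R]_n) (l : seq 'I_n) : 'M[R]_n :=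
  foldl (@chol_step R n) A l.

Definition l1norm (R : realType) n (v : 'cV[R]_n) : R := \sum_j `|v j 0|.

(* Each elimination step is a Schur complement.  For symmetric B with B_ii > 0 and
   x = B e_i / sqrt B_ii, completing the square gives
     v^T (B - x x^T) v = w^T B w,   w = v - ((B v)_i / B_ii) e_i,
   and w agrees with v off the coordinate i.  Hence, after the pivots of a set E
   have been eliminated from a positive definite A, the current matrix is
   symmetric, its rows indexed by E vanish, and its quadratic form is positive at
   every v with a nonzero coordinate outside E.  So every pivot is positive, the
   final matrix is 0, and the rank-one terms x_k x_k^T telescope to A.  Finally
   ||x||_1^2 <= n ||x||_2^2 = n tr (x x^T) by Cauchy-Schwarz, and summing over k
   gives n tr A. *)

From HB Require Import structures.
From mathcomp Require Import all_boot all_order all_algebra all_fingroup.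
From mathcomp Require Import reals ring lra.

Set Implicit Arguments.
Unset Strict Implicit.
Unset Printing Implicit Defensive.

Import Order.TTheory GRing.Theory Num.Theory.
Local Open Scope ring_scope.

Section BilinearForm.
Variables (R : comPzRingType) (n : nat).
Implicit Types (B : 'M[R]_n) (u v : 'cV[R]_n).

Definition bform B u v : R := (u^T *m B *m v) 0 0.

Lemma bformBl B u1 u2 v : bform B (u1 - u2) v = bform B u1 v - bform B u2 v.
Proof. by rewrite /bform linearB /= !mulmxBl !mxE. Qed.

Lemma bformBr B u v1 v2 : bform B u (v1 - v2) = bform B u v1 - bform B u v2.
Proof. by rewrite /bform mulmxBr !mxE. Qed.

Lemma bformZl B a u v : bform B (a *: u) v = a * bform B u v.
Proof. by rewrite /bform linearZ /= -!scalemxAl mxE. Qed.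

Lemma bformZr B a u v : bform B u (a *: v) = a * bform B u v.
Proof. by rewrite /bform -scalemxAr mxE. Qed.

Lemma bformBm B1 B2 u v : bform (B1 - B2) u v = bform B1 u v - bform B2 u v.
Proof. by rewrite /bform mulmxBr mulmxBl !mxE. Qed.

Lemma trmx11 (M : 'M[R]_1) : M 0 0 = M^T 0 0.
Proof. by rewrite mxE. Qed.

Lemma bformC B u v : B^T = B -> bform B u v = bform B v u.
Proof. by move=> sB; rewrite /bform trmx11 !trmx_mul trmxK sB mulmxA. Qed.

Lemma bform_deltal B i v : bform B (delta_mx i 0) v = (B *m v) i 0.
Proof. by rewrite /bform trmx_delta -rowE -row_mul mxE. Qed.

Lemma bform_delta B i : bform B (delta_mx i 0) (delta_mx i 0) = B i i.
Proof. by rewrite bform_deltal -colE mxE. Qed.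

Lemma bform_outer (x v : 'cV[R]_n) : bform (x *m x^T) v v = ((x^T *m v) 0 0) ^+ 2.
Proof.
by rewrite /bform mulmxA -mulmxA [in LHS]mxE big_ord1 trmx11 trmx_mul trmxK expr2.
Qed.

End BilinearForm.

Section CholeskyStep.
Variables (R : realType) (n : nat).
Implicit Types (A B : 'M[R]_n) (v : 'cV[R]_n) (l : seq 'I_n).

Lemma chol_vecE B i : chol_vec B i = (Num.sqrt (B i i))^-1 *: (row i B)^T.
Proof. by apply/matrixP => j k; rewrite !mxE mulrC. Qed.

Lemma chol_stepE B i j k : 0 <= B i i ->
  chol_step B i j k = B j k - B i j * B i k / B i i.
Proof.
move=> Bii_ge0; rewrite !mxE big_ord1 !mxE.
by rewrite mulrACA -invfM -expr2 sqr_sqrtr // mulrC.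
Qed.

Lemma chol_step_sym B i : sym_mx B -> sym_mx (chol_step B i).
Proof. by move=> sB; rewrite /sym_mx /chol_step linearB /= trmx_mul trmxK sB. Qed.

Lemma bform_chol_step B i v : sym_mx B -> 0 < B i i ->
  let t := (B *m v) i 0 / B i i in
  bform (chol_step B i) v v = bform B (v - t *: delta_mx i 0) (v - t *: delta_mx i 0).
Proof.
move=> sB Bii_gt0 t.
have sqrtK : Num.sqrt (B i i) ^+ 2 = B i i by rewrite sqr_sqrtr // ltW.
rewrite bformBm bform_outer chol_vecE linearZ /= trmxK -scalemxAl mxE -row_mul mxE.
rewrite !(bformBl, bformBr, bformZl, bformZr) bform_delta bform_deltal.
rewrite [bform B v (delta_mx _ _)]bformC // bform_deltal /t.
by rewrite exprMn exprVn sqrtK; field; rewrite gt_eqF.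
Qed.

Definition schur_posdef (E : {set 'I_n}) B : Prop :=
  [/\ sym_mx B, forall j k, j \in E -> B j k = 0 &
      forall v, (exists2 j, j \notin E & v j 0 != 0) -> 0 < bform B v v].

Lemma schur_posdef0 B : sym_mx B -> posdef_mx B -> schur_posdef set0 B.
Proof.
move=> sB pB; split=> // [j k|v [j _ vj]]; first by rewrite inE.
by apply: pB; apply: contraNneq vj => ->; rewrite mxE.
Qed.

Lemma schur_posdef_pivot_gt0 E B i : schur_posdef E B -> i \notin E -> 0 < B i i.
Proof.
case=> _ _ pB iE; rewrite -bform_delta; apply: pB.
by exists i; rewrite // mxE !eqxx oner_neq0.
Qed.

Lemma schur_posdef_step E B i : schur_posdef E B -> i \notin E ->
  schur_posdef (i |: E) (chol_step B i).
Proof.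
move=> BE iE; have Bii_gt0 := schur_posdef_pivot_gt0 BE iE.
case: BE => sB zB pB.
have Bsym j k : B j k = B k j by rewrite -{1}sB mxE.
split=> [|j k|v [j jE vj]]; first exact: chol_step_sym.
  rewrite in_setU1 chol_stepE ?ltW // => /predU1P[->|jE].
    by field; rewrite gt_eqF.
  by rewrite zB // [B i j]Bsym zB // !mul0r subr0.
move: jE; rewrite in_setU1 negb_or => /andP[/negbTE ji jE].
by rewrite bform_chol_step //; apply: pB; exists j; rewrite // !mxE ji mulr0 subr0.
Qed.

Lemma schur_posdefT B : schur_posdef setT B -> B = 0.
Proof. by case=> _ zB _; apply/matrixP => j k; rewrite zB ?inE ?mxE. Qed.

Lemma chol_mat_rcons A l i : chol_mat A (rcons l i) = chol_step (chol_mat A l) i.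
Proof. exact: foldl_rcons. Qed.

Lemma schur_posdef_chol_mat A l : sym_mx A -> posdef_mx A -> uniq l ->
  schur_posdef [set j in l] (chol_mat A l).
Proof.
move=> sA pA; elim/last_ind: l => [_|l i IHl].
  by rewrite set_nil; exact: schur_posdef0.
rewrite rcons_uniq chol_mat_rcons => /andP[il ul].
have -> : [set j in rcons l i] = i |: [set j in l].
  by apply/setP => j; rewrite !inE mem_rcons in_cons.
by apply: schur_posdef_step; rewrite ?inE //; exact: IHl.
Qed.

End CholeskyStep.

Lemma take_perm_enum_succ n (s : 'S_n) (k : 'I_n) :
  let p := [seq s i | i <- enum 'I_n] in take k.+1 p = rcons (take k p) (s k).
Proof.
move=> p; have size_p : size p = n by rewrite size_map size_enum_ord.
rewrite (take_nth (s k)) ?size_p //.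
by rewrite (nth_map k) ?nth_ord_enum ?size_enum_ord.
Qed.

Lemma sqr_sum_le (R : realFieldType) m (a : 'I_m -> R) :
  (\sum_j a j) ^+ 2 <= m%:R * \sum_j a j ^+ 2.
Proof.
rewrite expr2 mulr_suml; under eq_bigr do rewrite mulr_sumr.
apply: (@le_trans _ _ (\sum_j \sum_k (a j ^+ 2 + a k ^+ 2) / 2)).
  apply: ler_sum => j _; apply: ler_sum => k _.
  by have := sqr_ge0 (a j - a k); rewrite sqrrB -mulr_natr; lra.
under eq_bigr do rewrite -mulr_suml big_split /= sumr_const card_ord.
rewrite -mulr_suml big_split /= sumr_const card_ord -sumrMnl -mulr2n.
by rewrite -[_ *+ 2]mulr_natr mulfK ?pnatr_eq0 // mulr_natl sumrMnl.
Qed.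

Lemma mxtrace_outer (R : comPzRingType) n (x : 'cV[R]_n) :
  \tr (x *m x^T) = \sum_j x j 0 ^+ 2.
Proof.
rewrite mxtrace_mulC /mxtrace big_ord1 mxE.
by apply: eq_bigr => j _; rewrite mxE expr2.
Qed.

Lemma l1norm_sqr_le (R : realType) n (x : 'cV[R]_n) :
  l1norm x ^+ 2 <= n%:R * \tr (x *m x^T).
Proof.
rewrite mxtrace_outer (eq_bigr (fun j => `|x j 0| ^+ 2)) => [|j _].
  exact: sqr_sum_le.
by rewrite real_normK ?num_real.
Qed.

Theorem proposition2 (R : realType) (n : nat) (A : 'M[R]_n) (s : 'S_n) :
  sym_mx A -> posdef_mx A ->
  let Ak := fun k : 'I_n => chol_mat A (take k [seq s i | i <- enum 'I_n]) in
  let x := fun k : 'I_n => chol_vec (Ak k) (s k) in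
  (forall k : 'I_n, 0 < Ak k (s k) (s k)) /\
  \sum_(k < n) x k *m (x k)^T = A /\
  \sum_(k < n) l1norm (x k) ^+ 2 <= n%:R * \tr A.
Proof.
move=> sA pA Ak x.
pose p := [seq s i | i <- enum 'I_n]; pose F k := chol_mat A (take k p).
have p_uniq : uniq p by rewrite map_inj_uniq ?enum_uniq //; exact: perm_inj.
have F_schur k : schur_posdef [set j in take k p] (F k).
  by apply: schur_posdef_chol_mat; rewrite ?take_uniq.
have pivot_fresh (k : 'I_n) : s k \notin take k p.
  by have := take_uniq k.+1 p_uniq; rewrite take_perm_enum_succ rcons_uniq => /andP[].
have outer_F (k : 'I_n) : x k *m (x k)^T = F k - F k.+1.
  by rewrite /F take_perm_enum_succ chol_mat_rcons /chol_step opprB addrC subrK.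
have F_end : F n = 0.
  have p_all : [set j in p] = setT.
    by apply/setP => j; rewrite !inE -[j](permKV s) map_f ?mem_enum.
  have := F_schur n; rewrite /F take_oversize ?p_all; first exact: schur_posdefT.
  by rewrite size_map size_enum_ord.
have sum_outer : \sum_(k < n) x k *m (x k)^T = A.
  rewrite (eq_bigr _ (fun k _ => outer_F k)) -(big_mkord xpredT (fun k => F k - F k.+1)).
  under eq_bigr do rewrite -opprB.
  by rewrite sumrN telescope_sumr // F_end sub0r opprK /F take0.
split=> [k|]; first by apply: schur_posdef_pivot_gt0 (F_schur k) _; rewrite inE.
split=> //; rewrite -sum_outer raddf_sum mulr_sumr.
by apply: ler_sum => k _; exact: l1norm_sqr_le.
Qed.
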